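(* Let $m,n\geq2$, let $\mathbf p\in\mathbb R^m$, $\mathbf q\in\mathbb R^n$ be probability vectors with all entries strictly positive, and let $\alpha\geq0$, $\alpha\neq1$. Let $H$ denote either the Rényi entropy $H^R_\alpha(P)=\frac1{1-\alpha}\log\big(\sum_{i,j}p_{i,j}^\alpha\big)$ or the Tsallis entropy $H^T_\alpha(P)=\frac1{1-\alpha}\big(\sum_{i,j}p_{i,j}^\alpha-1\big)$. If $\tilde P\in\mathcal C(\mathbf p,\mathbf q)$ satisfies $H(\tilde P)=\inf_{P\in\mathcal C(\mathbf p,\mathbf q)}H(P)$, then $\tilde P\in\mathscr C(\mathbf p,\mathbf q)=\mathcal C_e(\mathbf p,\mathbf q)$ and $H(\tilde P)=\min_{P\in\mathscr C(\mathbf p,\mathbf q)}H(P)$.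
   Context: $\mathcal C(\mathbf p,\mathbf q)$ is the set of nonnegative $m\times n$ matrices with row sums $p_i$ and column sums $q_j$; $\mathcal C_e(\mathbf p,\mathbf q)$ its set of extreme points. $V(P)=\{(i,j):p_{i,j}\neq0\}$. $\mathscr C(\mathbf p,\mathbf q)$ is the set of $P\in\mathcal C(\mathbf p,\mathbf q)$ with $V(P)\subset T$ for some tree $T\subset[m]\times[n]$ with $|T|=m+n-1$. Graph notions: two distinct points of $[m]\times[n]$ are adjacent iff they share a row or a column; a circuit is a cyclic sequence $v_0,\dots,v_{s-1}$ ($s\geq4$) of pairwise distinct points $v_k=(i_k,j_k)$ with (indices mod $s$) $v_k,v_{k+1}$ adjacent and $(i_{k+2}-i_k)(j_{k+2}-j_k)\neq0$ for all $k$; a tree is a connected subset containing no circuit. *)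

From HB Require Import structures.
From mathcomp Require Import all_boot all_order all_algebra.
From mathcomp Require Import all_classical all_reals.
From mathcomp Require Import exp.
Set Implicit Arguments. Unset Strict Implicit. Unset Printing Implicit Defensive.
Import Order.TTheory GRing.Theory Num.Theory.
Local Open Scope ring_scope.

Section Defs.
Variables (R : realType) (m n : nat).
Local Notation point := ('I_m * 'I_n)%type.

Definition transport (p : 'I_m -> R) (q : 'I_n -> R) (P : 'M[R]_(m, n)) : Prop :=
  [/\ (forall i j, 0 <= P i j),
      (forall i, \sum_(j < n) P i j = p i) &
      (forall j, \sum_(i < m) P i j = q j)].

Definition extreme (p : 'I_m -> R) (q : 'I_n -> R) (P : 'M[R]_(m, n)) : Prop :=
  transport p q P /\
  forall (A B : 'M[R]_(m, n)) (t : R),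
    transport p q A -> transport p q B -> 0 < t < 1 ->
    P = t *: A + (1 - t) *: B -> A = B.

Definition support (P : 'M[R]_(m, n)) : {set point} :=
  [set x : point | P x.1 x.2 != 0].

Definition adjacent (x y : point) : bool :=
  (x != y) && ((x.1 == y.1) || (x.2 == y.2)).

Definition connected_set (T : {set point}) : Prop :=
  forall x y, x \in T -> y \in T ->
    connect (fun u v => [&& u \in T, v \in T & adjacent u v]) x y.

Definition has_circuit (T : {set point}) : Prop :=
  exists (s : nat) (v : 'I_s -> point),
    [/\ (4 <= s)%N, injective v,
        (forall k, v k \in T),
        (forall k, adjacent (v k) (v (ordS k))) &
        (forall k, ((v (ordS (ordS k))).1 != (v k).1) /\
                   ((v (ordS (ordS k))).2 != (v k).2))].

Definition is_tree (T : {set point}) : Prop :=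
  connected_set T /\ ~ has_circuit T.

Definition tree_transport (p : 'I_m -> R) (q : 'I_n -> R) (P : 'M[R]_(m, n)) : Prop :=
  transport p q P /\
  exists T : {set point}, [/\ is_tree T, #|T| = (m + n - 1)%N & support P \subset T].

(* sum of p_{ij}^alpha over the nonzero entries (convention 0^alpha = 0) *)
Definition power_sum (alpha : R) (P : 'M[R]_(m, n)) : R :=
  \sum_(i < m) \sum_(j < n | P i j != 0) powR (P i j) alpha.

Inductive entropy_kind := Renyi | Tsallis.

Definition entropy (k : entropy_kind) (alpha : R) (P : 'M[R]_(m, n)) : R :=
  match k with
  | Renyi => (1 - alpha)^-1 * ln (power_sum alpha P)
  | Tsallis => (1 - alpha)^-1 * (power_sum alpha P - 1)
  end.

End Defs.

From HB Require Import structures.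
From mathcomp Require Import all_boot all_order all_algebra.
From mathcomp Require Import all_classical all_reals.
From mathcomp Require Import sequences exp.
From mathcomp Require Import ring lra.
Import Order.TTheory GRing.Theory Num.Theory.
Local Open Scope ring_scope.
Set Implicit Arguments. Unset Strict Implicit. Unset Printing Implicit Defensive.

(* Call a set S of cells independent when no nonzero balanced matrix (all row
   and column sums zero) is supported on S; equivalently, the vectors
   e_i + f_j, (i, j) in S, are linearly independent in K^(m+n).  A plan P is
   extreme iff V(P) is independent, since P +- eD stays in C(p,q) for a small
   balanced D supported on V(P).  Circuits carry the alternating +-1 balanced
   matrix, and conversely the support of a nonzero balanced matrix contains a
   cycle of the bipartite row/column graph, so acyclic sets are independent.
   An independent set extends to a maximal one, which spans all e_i + f_j:
   its span has dimension m + n - 1 and it is connected, hence a tree.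
   A minimiser of H has independent support: along a balanced D supported on
   V(P) the power sum is strictly concave (alpha < 1) or convex (alpha > 1), so
   one of P +- eD has smaller entropy; for alpha = 0 the power sum counts the
   support, which shrinks when one moves along D until an entry vanishes. *)

Lemma free_enumP (K : fieldType) (vT : vectType K) (T : finType) (f : T -> vT)
    (S : {set T}) :
  reflect (forall c : T -> K, \sum_(x in S) c x *: f x = 0 -> {in S, forall x, c x = 0})
    (free [seq f x | x <- enum S]).
Proof.
set X := [seq f x | x <- enum S].
have sizeX : size X = #|S| by rewrite size_map cardE.
have [S0 | [x0 _]] := set_0Vmem S.
  rewrite /X S0 enum_set0 nil_free; apply: ReflectT => c _ x; by rewrite inE.
have sumX c : \sum_(x in S) c x *: f x =
    \sum_(i < #|S|) c (nth x0 (enum S) i) *: X`_i.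
  rewrite -big_enum (big_nth x0) cardE big_mkord.
  by apply: eq_bigr => i _; rewrite (nth_map x0).
apply: (iffP idP) => [/freeP freeX c /[1!sumX] c0 x xS | freeS].
  have ltxS : (index x (enum S) < #|S|)%N by rewrite cardE index_mem mem_enum.
  have := freeX (fun i => c (nth x0 (enum S) i)).
  by move=> /(_ c0 (Ordinal ltxS)) /=; rewrite nth_index ?mem_enum.
rewrite -[X]in_tupleE; apply/freeP => k k0 i; rewrite /= sizeX in k i k0 *.
pose c x := oapp k 0 (insub (index x (enum S)) : option 'I_#|S|).
have cE (j : 'I_#|S|) : c (nth x0 (enum S) j) = k j.
  by rewrite /c index_uniq ?enum_uniq -?cardE // valK.
rewrite -cE; apply: freeS; last by rewrite -mem_enum mem_nth // -cardE.
by rewrite sumX; under eq_bigr do rewrite cE.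
Qed.

Lemma sum_pairE (V : nmodType) (I J : finType) (F : I * J -> V) :
  \sum_x F x = \sum_i \sum_j F (i, j).
Proof. by rewrite pair_bigA; apply: eq_bigr => -[]. Qed.

Section Independence.
Variables (R : zmodType) (m n : nat).
Local Notation cell := ('I_m * 'I_n)%type.

Definition balanced (D : 'M[R]_(m, n)) : Prop :=
  (forall i, \sum_j D i j = 0) /\ (forall j, \sum_i D i j = 0).

Definition supported_on (S : {set cell}) (D : 'M[R]_(m, n)) : Prop :=
  forall i j, (i, j) \notin S -> D i j = 0.

Definition independent (S : {set cell}) : Prop :=
  forall D, supported_on S D -> balanced D -> D = 0.

End Independence.

Section CellVectors.
Variables (K : fieldType) (m n : nat).
Local Notation cell := ('I_m * 'I_n)%type.

Definition cell_vec (x : cell) : 'rV[K]_(m + n) :=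
  delta_mx 0 (lshift n x.1) + delta_mx 0 (rshift m x.2).

Definition cell_vecs (S : {set cell}) := [seq cell_vec x | x <- enum S].

Lemma cell_vec_lshift x i : cell_vec x 0 (lshift n i) = (x.1 == i)%:R.
Proof.
by rewrite !mxE eqxx /= (inj_eq (@lshift_inj _ _)) eq_lrshift addr0 eq_sym.
Qed.

Lemma cell_vec_rshift x j : cell_vec x 0 (rshift m j) = (x.2 == j)%:R.
Proof.
by rewrite !mxE eqxx /= (inj_eq (@rshift_inj _ _)) eq_rlshift add0r eq_sym.
Qed.

Lemma sum_cell_vec_lshift (D : 'M[K]_(m, n)) i :
  (\sum_x D x.1 x.2 *: cell_vec x) 0 (lshift n i) = \sum_j D i j.
Proof.
rewrite summxE; under eq_bigr do rewrite mxE cell_vec_lshift.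
rewrite sum_pairE (bigD1 i) //= [X in _ + X]big1 ?addr0 => [|i' /negPf i'i].
  by apply: eq_bigr => j _; rewrite eqxx mulr1.
by apply: big1 => j _; rewrite i'i mulr0.
Qed.

Lemma sum_cell_vec_rshift (D : 'M[K]_(m, n)) j :
  (\sum_x D x.1 x.2 *: cell_vec x) 0 (rshift m j) = \sum_i D i j.
Proof.
rewrite summxE; under eq_bigr do rewrite mxE cell_vec_rshift.
rewrite sum_pairE exchange_big (bigD1 j) //= [X in _ + X]big1 ?addr0 => [|j' /negPf j'j].
  by apply: eq_bigr => i _; rewrite eqxx mulr1.
by apply: big1 => i _; rewrite j'j mulr0.
Qed.

Lemma balanced_cell_vecP (D : 'M[K]_(m, n)) :
  balanced D <-> \sum_x D x.1 x.2 *: cell_vec x = 0.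
Proof.
split=> [[rowD colD] | D0].
  apply/rowP => k; rewrite mxE; case: (split_ordP k) => [i -> | j ->].
    by rewrite sum_cell_vec_lshift.
  by rewrite sum_cell_vec_rshift.
split=> [i | j].
  by rewrite -sum_cell_vec_lshift D0 mxE.
by rewrite -sum_cell_vec_rshift D0 mxE.
Qed.

Lemma sum_cell_vec_supported S (D : 'M[K]_(m, n)) : supported_on S D ->
  \sum_(x in S) D x.1 x.2 *: cell_vec x = \sum_x D x.1 x.2 *: cell_vec x.
Proof.
move=> suppD; rewrite big_mkcond; apply: eq_bigr => -[i j] _ /=.
by case: ifPn => // /suppD ->; rewrite scale0r.
Qed.

Lemma independent_free S : independent K S <-> free (cell_vecs S).
Proof.
split=> [indS | /free_enumP freeS D suppD /balanced_cell_vecP].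
  apply/free_enumP => c c0 x xS.
  pose D := \matrix_(i, j) if (i, j) \in S then c (i, j) else 0.
  have suppD : supported_on S D by move=> i j /negPf ijS; rewrite mxE ijS.
  have D0 : D = 0.
    apply: indS => //; apply/balanced_cell_vecP.
    rewrite -(sum_cell_vec_supported suppD) -[RHS]c0.
    by apply: eq_bigr => -[i j] ijS; rewrite mxE ijS.
  case: x xS => i j ijS.
  by have := congr1 (fun M : 'M_(m, n) => M i j) D0; rewrite !mxE ijS.
rewrite -(sum_cell_vec_supported suppD) => /freeS D0; apply/matrixP => i j; rewrite mxE.
by case: (boolP ((i, j) \in S)) => [/D0 | /suppD].
Qed.

End CellVectors.

Section Spanning.
Variables (K : fieldType) (m n : nat).
Local Notation cell := ('I_m * 'I_n)%type.
Local Notation cell_vec := (@cell_vec K m n).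
Local Notation cell_vecs := (@cell_vecs K m n).

Definition spanning (F : {set cell}) : Prop :=
  forall x, cell_vec x \in <<cell_vecs F>>%VS.

Lemma cell_vec_in_span (F : {set cell}) x : x \in F -> cell_vec x \in <<cell_vecs F>>%VS.
Proof. by move=> xF; apply/memv_span/map_f; rewrite mem_enum. Qed.

Lemma maximal_free_spanning (F : {set cell}) :
  free (cell_vecs F) -> (forall x, x \notin F -> ~~ free (cell_vecs (x |: F))) ->
  spanning F.
Proof.
move=> freeF maxF x; have [/cell_vec_in_span // | xF] := boolP (x \in F).
have : perm_eq (cell_vecs (x |: F)) (cell_vec x :: cell_vecs F).
  rewrite -map_cons; apply/perm_map/uniq_perm => [||y]; rewrite ?enum_uniq //=.
    by rewrite enum_uniq mem_enum xF.
  by rewrite !inE !mem_enum !inE.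
move/perm_free => freeE; move: (maxF x xF).
by rewrite freeE free_cons freeF andbT negbK.
Qed.

Section Cross.
Variables (i0 : 'I_m) (j0 : 'I_n).

Definition cross : {set cell} := [set x | (x.1 == i0) || (x.2 == j0)].

Lemma independent_cross : independent K cross.
Proof.
move=> D suppD [rowD colD].
have D_out i j : i != i0 -> j != j0 -> D i j = 0.
  by move=> /negPf ii0 /negPf jj0; apply: suppD; rewrite inE /= ii0 jj0.
have D_col i : D i j0 = 0.
  rewrite -(rowD i) (bigD1 j0) //= big1 ?addr0 // => j jj0.
  have [->|ii0] := eqVneq i i0; last exact: D_out.
  rewrite -(colD j) (bigD1 i0) //= big1 ?addr0 // => i' i'i0; exact: D_out.
apply/matrixP => i j; rewrite mxE.
have [->|jj0] := eqVneq j j0; first exact: D_col.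
have [->|ii0] := eqVneq i i0; last exact: D_out.
rewrite -(colD j) (bigD1 i0) //= big1 ?addr0 // => i' i'i0; exact: D_out.
Qed.

Lemma spanning_cross : spanning cross.
Proof.
move=> x; have -> : cell_vec x = cell_vec (x.1, j0) - cell_vec (i0, j0) + cell_vec (i0, x.2).
  by apply/rowP => k; rewrite !mxE /=; ring.
by rewrite memvD ?memvB // cell_vec_in_span // inE eqxx ?orbT.
Qed.

Lemma card_cross : #|cross| = (m + n - 1)%N.
Proof.
have -> : cross = finset.setX [set i0] finset.setT :|: finset.setX finset.setT [set j0].
  by apply/setP => -[i j]; rewrite !inE andbT.
rewrite cardsU !cardsX !cards1 !cardsT !card_ord mul1n muln1.
have -> : finset.setX [set i0] finset.setT :&: finset.setX finset.setT [set j0] = [set (i0, j0)].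
  by apply/setP => -[i j]; rewrite !inE andbT xpair_eqE.
by rewrite cards1 addnC.
Qed.

End Cross.

Lemma card_free_spanning (F : {set cell}) : (0 < m)%N -> (0 < n)%N ->
  free (cell_vecs F) -> spanning F -> #|F| = (m + n - 1)%N.
Proof.
move=> m0 n0 freeF spanF; set X := cross (Ordinal m0) (Ordinal n0).
have freeX : free (cell_vecs X) by apply/independent_free/independent_cross.
have spanE : (<<cell_vecs F>> = <<cell_vecs X>>)%VS.
  apply/eqP; rewrite eqEsubv; apply/andP; split; apply/span_subvP => _ /mapP [x _ ->].
    exact: spanning_cross.
  exact: spanF.
rewrite -(card_cross (Ordinal m0) (Ordinal n0)) -/X !cardE -!(size_map cell_vec).
by move: freeF freeX; rewrite /free spanE => /eqP <- /eqP <-.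
Qed.

End Spanning.

Section Connectivity.
Variables (K : fieldType) (m n : nat).
Local Notation cell := ('I_m * 'I_n)%type.

Lemma span_mulmx_eq0 (X : seq 'rV[K]_(m + n)) (u : 'cV[K]_(m + n)) w :
  w \in <<X>>%VS -> {in X, forall x, x *m u = 0} -> w *m u = 0.
Proof.
move=> /(@coord_span _ _ _ (in_tuple X)) -> Xu; rewrite mulmx_suml big1 // => i _.
by rewrite -scalemxAl Xu ?scaler0 // mem_nth.
Qed.

Lemma cell_vec_mul_col_mx x (a : 'cV[K]_m) (b : 'cV[K]_n) :
  (cell_vec K x *m col_mx a b) 0 0 = a x.1 0 + b x.2 0.
Proof. by rewrite mulmxDl -!rowE !mxE (unsplitK (inl _ x.1)) (unsplitK (inr _ x.2)). Qed.

Lemma spanning_connected (F : {set cell}) : spanning K F -> connected_set F.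
Proof.
move=> spanF x y xF yF.
set e := fun u v : cell => _; set C := connect e x.
have C_F z : C z -> z \in F.
  case/connectP=> p; elim/last_ind: p => [_ -> //|p w _].
  by rewrite rcons_path last_rcons => /andP[_ /and3P[]] _ + _ ->.
pose row_in i := [exists z, C z && (z.1 == i)].
pose col_in j := [exists z, C z && (z.2 == j)].
have C_step z : z \in F -> row_in z.1 || col_in z.2 -> C z.
  move=> zF /orP[] /existsP[w /andP[Cw /eqP wz]]; have [<- // | wz'] := eqVneq w z;
    have wF := C_F w Cw; apply: connect_trans Cw (connect1 _);
    by apply/and3P; split; [exact: wF | exact: zF | rewrite /adjacent wz eqxx ?orbT andbT].
(* [u] is 1 on the rows and -1 on the columns met by the component [C] of [x]:
   it annihilates every cell of [F], hence every cell since [F] is spanning. *)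
pose u := col_mx (\col_i (row_in i)%:R) (\col_j - (col_in j)%:R) : 'cV[K]_(m + n).
have uE z : (cell_vec K z *m u) 0 0 = (row_in z.1)%:R - (col_in z.2)%:R.
  by rewrite cell_vec_mul_col_mx !mxE.
have row_colE z : row_in z.1 = col_in z.2.
  have /(congr1 (fun M : 'M_1 => M 0 0)) : cell_vec K z *m u = 0.
    apply: span_mulmx_eq0 (spanF z) _ => _ /mapP[w wF ->]; apply/rowP => k.
    rewrite ord1 uE mxE; rewrite mem_enum in wF.
    have [Cw | nCw] := boolP (C w).
      have rw : row_in w.1 by apply/existsP; exists w; rewrite Cw eqxx.
      have cw : col_in w.2 by apply/existsP; exists w; rewrite Cw eqxx.
      by rewrite rw cw subrr.
    have rw : ~~ row_in w.1 by apply: contra nCw => rw; apply: C_step; rewrite ?rw.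
    have cw : ~~ col_in w.2 by apply: contra nCw => cw; apply: C_step; rewrite ?cw ?orbT.
    by rewrite (negPf rw) (negPf cw) subrr.
  rewrite uE mxE; case: (row_in _); case: (col_in _) => //= /eqP.
    by rewrite subr0 oner_eq0.
  by rewrite sub0r oppr_eq0 oner_eq0.
have row_x : row_in x.1 by apply/existsP; exists x; rewrite /C connect0 eqxx.
have all_cols j : col_in j by rewrite -(row_colE (x.1, j)).
by apply: C_step; rewrite ?yF // (row_colE y) all_cols orbT.
Qed.

End Connectivity.

Lemma sum_sign_reversing_involution (R : numDomainType) (T : finType) (f : T -> T)
    (F : T -> R) :
  involutive f -> (forall x, F (f x) = - F x) -> \sum_x F x = 0.
Proof.
move=> fK Ff; have SE : \sum_x F x = - \sum_x F x.
  by rewrite [LHS](reindex_inj (inv_inj fK)) -sumrN; apply: eq_bigr => x _; rewrite Ff.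
by apply/eqP; rewrite -[_ == 0]/((2 == 0)%N || _) -mulrn_eq0 mulr2n {2}SE subrr.
Qed.

Lemma val_iter_ordS s (k : 'I_s) t : val (iter t (@ordS s) k) = ((k + t) %% s)%N.
Proof.
elim: t => [|t IHt] /=; first by rewrite addn0 modn_small.
by rewrite IHt -addn1 modnDml addn1 addnS.
Qed.

Lemma iter_ordS_inj s (k : 'I_s) a b : (a < s)%N -> (b < s)%N ->
  (iter a (@ordS s) k == iter b (@ordS s) k) = (a == b).
Proof.
move=> ltas ltbs; rewrite -val_eqE /= !val_iter_ordS.
by rewrite eqn_modDl !modn_small.
Qed.

Section Alternating.
Variables (s : nat) (b : 'I_s -> bool).
Hypothesis bS : forall k, b (ordS k) = ~~ b k.

Lemma alternating_even (k : 'I_s) : ~~ odd s.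
Proof.
have bt t : b (iter t (@ordS s) k) = b k (+) odd t.
  by elim: t => [|t IHt] /=; rewrite ?addbF // bS IHt addbN.
have : iter s (@ordS s) k = k by apply: val_inj; rewrite val_iter_ordS modnDr modn_small.
by move/(congr1 b); rewrite bt; case: (b k); case: (odd s).
Qed.

Lemma sign_ordS (R : ringType) (k : 'I_s) : (-1) ^+ ordS k = - (-1) ^+ k :> R.
Proof.
have even_s := alternating_even k.
rewrite /=; case: (ltnP k.+1 s) => [ltks | leks].
  by rewrite modn_small // exprS mulN1r.
have ks : k.+1 = s by apply/eqP; rewrite eqn_leq ltn_ord.
rewrite ks modnn expr0 -signr_odd.
have -> : odd k by move: even_s; rewrite -[in odd s]ks /= negbK.
by rewrite expr1 opprK.
Qed.

Definition partner (k : 'I_s) := if b k then ordS k else ord_pred k.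

Lemma partnerK : involutive partner.
Proof.
move=> k; rewrite {2}/partner; case: ifPn => bk; first by rewrite /partner bS bk ordSK.
have bk' : b (ord_pred k) by rewrite -[b _]negbK -bS ord_predK.
by rewrite /partner bk' ord_predK.
Qed.

Lemma sign_partner (R : ringType) k : (-1) ^+ partner k = - (-1) ^+ k :> R.
Proof.
rewrite /partner; case: ifP => _; first exact: sign_ordS.
by rewrite -{2}[k]ord_predK sign_ordS opprK.
Qed.

End Alternating.

Lemma sum_indicator_row (R : ringType) m n (x : 'I_m * 'I_n) i :
  \sum_j ((x == (i, j))%:R : R) = (x.1 == i)%:R.
Proof.
case: x => a b /=; have [<-|ai] := eqVneq a i.
  rewrite (bigD1 b) //= eqxx big1 ?addr0 // => j jb.
  by rewrite xpair_eqE eqxx /= eq_sym (negPf jb).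
by rewrite big1 // => j _; rewrite xpair_eqE (negPf ai).
Qed.

Lemma sum_indicator_col (R : ringType) m n (x : 'I_m * 'I_n) j :
  \sum_i ((x == (i, j))%:R : R) = (x.2 == j)%:R.
Proof.
case: x => a b /=; have [<-|bj] := eqVneq b j.
  rewrite (bigD1 a) //= eqxx big1 ?addr0 // => i ia.
  by rewrite xpair_eqE eqxx andbT eq_sym (negPf ia).
by rewrite big1 // => i _; rewrite xpair_eqE (negPf bj) andbF.
Qed.

Section CircuitDependence.
Variables (m n : nat).
Local Notation cell := ('I_m * 'I_n)%type.

Variables (R : numDomainType) (s : nat) (v : 'I_s -> cell).
Hypotheses (v_inj : injective v) (v_adj : forall k, adjacent (v k) (v (ordS k)))
  (v_turn : forall k, (v (ordS (ordS k))).1 != (v k).1 /\ (v (ordS (ordS k))).2 != (v k).2).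

Definition row_step k := (v k).1 == (v (ordS k)).1.
Definition col_step k := (v k).2 == (v (ordS k)).2.

Lemma col_stepE k : col_step k = ~~ row_step k.
Proof.
have /andP[vk_neq] := v_adj k; rewrite /col_step /row_step.
case: eqP => [r|_]; case: eqP => [c|_] //= _.
by move: vk_neq; rewrite [v k]surjective_pairing [v (ordS k)]surjective_pairing r c eqxx.
Qed.

Lemma row_stepS k : row_step (ordS k) = ~~ row_step k.
Proof.
have [turn1 turn2] := v_turn k; apply/idP/idP => [rS | /negPf rk].
  by apply: contra turn1 => /eqP ->; rewrite (eqP rS).
apply: contraT; rewrite -col_stepE => cS.
have ck : col_step k by rewrite col_stepE rk.
by move: turn2; rewrite -(eqP cS) (eqP ck) eqxx.
Qed.

Lemma col_stepS k : col_step (ordS k) = ~~ col_step k.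
Proof. by rewrite !col_stepE row_stepS. Qed.

Lemma signed_count_eq0 (T : eqType) (f : cell -> T) (step : 'I_s -> bool) (t : T) :
  (forall k, step (ordS k) = ~~ step k) -> (forall k, step k = (f (v k) == f (v (ordS k)))) ->
  \sum_(k < s) (-1) ^+ k * ((f (v k) == t)%:R : R) = 0.
Proof.
move=> stepS stepE; apply: (sum_sign_reversing_involution (partnerK stepS)) => k.
rewrite sign_partner // mulNr; congr (- (_ * _%:R)); rewrite /partner.
case: ifPn => [| /negPf sk]; first by rewrite stepE => /eqP ->.
have := stepS (ord_pred k); rewrite ord_predK sk => /esym /negbFE.
by rewrite stepE ord_predK => /eqP ->.
Qed.

Definition circuit_matrix : 'M[R]_(m, n) :=
  \matrix_(i, j) \sum_(k < s) (-1) ^+ k * (v k == (i, j))%:R.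

Lemma circuit_matrix_balanced : balanced circuit_matrix.
Proof.
split=> [i | j].
  under eq_bigr do rewrite mxE; rewrite exchange_big /=.
  under eq_bigr do rewrite -mulr_sumr sum_indicator_row.
  exact: (signed_count_eq0 _ row_stepS).
under eq_bigr do rewrite mxE; rewrite exchange_big /=.
under eq_bigr do rewrite -mulr_sumr sum_indicator_col.
exact: (signed_count_eq0 _ col_stepS).
Qed.

Lemma circuit_matrix_neq0 k : circuit_matrix (v k).1 (v k).2 != 0.
Proof.
rewrite mxE -surjective_pairing (bigD1 k) //= eqxx mulr1 big1 ?addr0 ?signr_eq0 //.
by move=> l lk; rewrite (inj_eq v_inj) (negPf lk) mulr0.
Qed.

End CircuitDependence.

Lemma circuit_dependent (R : numDomainType) m n (S : {set 'I_m * 'I_n}) :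
  has_circuit S -> ~ independent R S.
Proof.
case=> s [v [s4 v_inj vS v_adj v_turn]] indS.
pose k0 : 'I_s := Ordinal (ltn_trans (isT : 0 < 3)%N s4).
have := circuit_matrix_neq0 R v_inj k0.
rewrite (indS _ _ (circuit_matrix_balanced R v_adj v_turn)) ?mxE ?eqxx // => i j ijS.
rewrite mxE big1 // => k _; case: eqP => [vk | _]; last by rewrite mulr0.
by move: ijS; rewrite -vk vS.
Qed.

Lemma sum_eq0_neq0 (V : zmodType) (I : finType) (F : I -> V) i :
  \sum_j F j = 0 -> F i != 0 -> exists2 j, j != i & F j != 0.
Proof.
move=> F0 Fi; case: (pickP (fun j => (j != i) && (F j != 0))) => [j /andP[]|none].
  by exists j.
exfalso; move/negP: Fi; apply; rewrite -F0 (bigD1 i) //= big1 ?addr0 // => j ji.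
by apply/eqP; move: (none j); rewrite ji => /negbFE.
Qed.

Section GridGraph.
Variables (m n : nat) (S : {set 'I_m * 'I_n}).
Local Notation cell := ('I_m * 'I_n)%type.
Local Notation vertex := ('I_m + 'I_n)%type.

(* S as a bipartite graph between the rows [inl i] and the columns [inr j]. *)
Definition grid_edge (a b : vertex) : bool :=
  match a, b with
  | inl i, inr j | inr j, inl i => (i, j) \in S
  | _, _ => false
  end.

Lemma grid_edge_sym : symmetric grid_edge.
Proof. by case=> [i|j] [i'|j']. Qed.

Lemma grid_edge_side a b : grid_edge a b -> is_inl b = ~~ is_inl a.
Proof. by case: a => [i|j]; case: b. Qed.

Definition incident (x : cell) (a : vertex) : bool := (a == inl x.1) || (a == inr x.2).

Lemma incident_share x y a : incident x a -> incident y a -> (x.1 == y.1) || (x.2 == y.2).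
Proof.
by case: a => [i|j]; rewrite /incident -!sum_eqE /= ?orbF => /eqP <- /eqP <-; rewrite eqxx ?orbT.
Qed.

(* [x0] is the junk value of [edge_cell] off the edges; from [circuit_or_long_path]
   on it is also the cell where the path construction starts. *)
Variable x0 : cell.

Definition edge_cell (a b : vertex) : cell :=
  match a, b with
  | inl i, inr j | inr j, inl i => (i, j)
  | _, _ => x0
  end.

Lemma edge_cell_in a b : grid_edge a b -> edge_cell a b \in S.
Proof. by case: a => [i|j]; case: b. Qed.

Lemma incident_edge_cell a b : grid_edge a b -> incident (edge_cell a b) =1 pred2 a b.
Proof.
by case: a => [i|j]; case: b => [i'|j'] //= _ c; rewrite /incident // orbC.
Qed.

Section Cycle.
Variables (s : nat) (w : 'I_s -> vertex).
Hypotheses (s_gt2 : (2 < s)%N) (w_inj : injective w)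
  (w_edge : forall k, grid_edge (w k) (w (ordS k))).

Let v k := edge_cell (w k) (w (ordS k)).

Lemma cycle_size_gt3 : (3 < s)%N.
Proof.
pose k0 : 'I_s := Ordinal (ltn_trans (isT : 0 < 2)%N s_gt2).
have /alternating_even : forall k, is_inl (w (ordS k)) = ~~ is_inl (w k).
  by move=> k; apply: grid_edge_side.
by move=> /(_ k0); rewrite ltn_neqAle s_gt2 andbT; apply: contra => /eqP <-.
Qed.

Lemma cycle_vertex_eq k a b : (a < 4)%N -> (b < 4)%N ->
  (w (iter a (@ordS s) k) == w (iter b (@ordS s) k)) = (a == b).
Proof.
move=> a4 b4; have s4 := cycle_size_gt3.
by rewrite (inj_eq w_inj) iter_ordS_inj // (leq_trans _ s4).
Qed.

Lemma incident_cycle k : incident (v k) =1 pred2 (w k) (w (ordS k)).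
Proof. exact/incident_edge_cell/w_edge. Qed.

Lemma cycle_circuit : has_circuit S.
Proof.
have w_neq k a b : (a < 4)%N -> (b < 4)%N -> a != b ->
    w (iter a (@ordS s) k) == w (iter b (@ordS s) k) = false.
  by move=> a4 b4 /negPf ab; rewrite cycle_vertex_eq.
exists s, v; split=> [|k l vkl|k|k|k].
- exact: cycle_size_gt3.
- have /(_ (w k)) := incident_cycle k; rewrite vkl incident_cycle /= eqxx.
  case/orP=> /eqP/w_inj // kl; exfalso.
  have /(_ (w (ordS k))) := incident_cycle k; rewrite vkl incident_cycle /= eqxx kl.
  by rewrite (w_neq l 2 0) ?(w_neq l 2 1).
- exact/edge_cell_in/w_edge.
- apply/andP; split.
    apply/eqP => vk; have /(_ (w k)) := incident_cycle k.
    by rewrite vk incident_cycle /= eqxx (w_neq k 0 1) ?(w_neq k 0 2).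
  by apply: (@incident_share _ _ (w (ordS k))); rewrite incident_cycle /= eqxx ?orbT.
- have disj c : incident (v k) c -> incident (v (ordS (ordS k))) c -> False.
    rewrite !incident_cycle /= => /orP[] /eqP -> /orP[] /eqP.
    + by move/eqP; rewrite (w_neq k 0 2).
    + by move/eqP; rewrite (w_neq k 0 3).
    + by move/eqP; rewrite (w_neq k 1 2).
    + by move/eqP; rewrite (w_neq k 1 3).
  split; apply/eqP => e.
    by apply: (disj (inl (v k).1)); rewrite /incident -?e eqxx.
  by apply: (disj (inr (v k).2)); rewrite /incident -?e eqxx orbT.
Qed.

End Cycle.

Lemma closed_path_circuit a p : path grid_edge a p -> uniq (a :: p) ->
  (1 < size p)%N -> grid_edge (last a p) a -> has_circuit S.
Proof.
move=> a_p uniq_p p2 last_a; pose w (k : 'I_(size p).+1) := nth a (a :: p) k.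
apply: (@cycle_circuit (size p).+1 w) => // [k l /eqP | k].
  by rewrite nth_uniq // => /eqP /val_inj.
rewrite /w /=; case: (ltnP k.+1 (size p).+1) => [ltk | gek].
  by rewrite modn_small //; move/pathP: a_p => /(_ a k ltk).
have -> : val k = size p by apply/eqP; rewrite eqn_leq -ltnS ltn_ord.
by rewrite modnn -[size p]/((size (a :: p)).-1) nth_last.
Qed.

Hypothesis branching : forall a b, grid_edge a b -> exists2 c, c != b & grid_edge a c.

Lemma circuit_or_long_path : x0 \in S -> forall L,
  has_circuit S \/ exists a p, [/\ path grid_edge a p, uniq (a :: p) & size p = L.+1].
Proof.
move=> x0S; elim=> [|L [|[a [p [a_p uniq_p size_p]]]]]; [right | by left | ].
  by exists (inl x0.1), [:: inr x0.2]; rewrite /= -surjective_pairing x0S.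
case: p a_p uniq_p size_p => [//|b p] a_p uniq_p size_p.
have [c cb ac] := branching (andP a_p).1.
have [c_p | c_p] := boolP (c \in a :: b :: p); last first.
  right; exists c, [:: a, b & p]; split; last by move: size_p => /= ->.
    by apply/andP; rewrite grid_edge_sym.
  by rewrite cons_uniq c_p.
have ca : c != a by apply/eqP => ca; move: (grid_edge_side ac); rewrite ca; case: is_inl.
have c_bp : c \in b :: p by move: c_p; rewrite inE (negPf ca).
left; set N := (index c (b :: p)).+1.
apply: (@closed_path_circuit a (take N (b :: p))).
- exact: take_path.
- exact: (take_uniq N.+1 uniq_p).
- by rewrite size_takel ?index_mem // /N /= eq_sym (negPf cb).
- rewrite (last_nth a) size_takel ?index_mem //.
  rewrite -[nth _ _ _]/(nth a (take N (b :: p)) (index c (b :: p))).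
  by rewrite nth_take ?nth_index // grid_edge_sym.
Qed.

Lemma branching_circuit : x0 \in S -> has_circuit S.
Proof.
move=> x0S; case: (circuit_or_long_path x0S (m + n)) => // -[a [p [_ uniq_p size_p]]].
have := max_card (mem (a :: p)).
by rewrite (card_uniqP uniq_p) /= size_p card_sum !card_ord => /ltnW; rewrite ltnn.
Qed.

End GridGraph.

Lemma has_circuitS m n (S T : {set 'I_m * 'I_n}) :
  S \subset T -> has_circuit S -> has_circuit T.
Proof.
move=> /fintype.subsetP ST [s [v [s4 v_inj vS v_adj v_turn]]].
by exists s, v; split=> // k; apply/ST/vS.
Qed.

Lemma acyclic_independent (R : zmodType) m n (T : {set 'I_m * 'I_n}) :
  ~ has_circuit T -> independent R T.
Proof.
move=> noT D suppD [rowD colD]; apply/matrixP => i j; rewrite mxE.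
apply/eqP/contraT => Dij; exfalso; apply: noT.
set U := [set x : 'I_m * 'I_n | D x.1 x.2 != 0].
apply: (@has_circuitS _ _ U).
  by apply/fintype.subsetP => -[a b]; rewrite inE; apply: contraR => /suppD ->.
apply: (@branching_circuit _ _ _ (i, j)); last by rewrite inE.
case=> [a|b] [a'|b'] //=; rewrite inE /= => Dab.
  have [b'' b''b' Dab''] := sum_eq0_neq0 (rowD a) Dab.
  by exists (inr b''); rewrite -?sum_eqE //= inE.
have [a'' a''a' Da''b] := sum_eq0_neq0 (colD b) Dab.
by exists (inl a''); rewrite -?sum_eqE //= inE.
Qed.

Lemma independent_extends_to_tree (K : numFieldType) m n (S : {set 'I_m * 'I_n}) :
  (0 < m)%N -> (0 < n)%N -> independent K S ->
  exists T, [/\ is_tree T, #|T| = (m + n - 1)%N & S \subset T].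
Proof.
move=> m0 n0 /independent_free freeS.
pose P (F : {set 'I_m * 'I_n}) := (S \subset F) && free (cell_vecs K F).
have [|F /andP[SF freeF] maxF] := @arg_maxnP _ S P (fun F => #|F|).
  by rewrite /P subxx freeS.
have spanF : spanning K F.
  apply: maximal_free_spanning freeF _ => x xF; apply/negP => freexF.
  have := maxF (x |: F); rewrite /P freexF (fintype.subset_trans SF (subsetU1 x F)) => /(_ isT).
  by rewrite cardsU1 xF add1n /= ltnn.
exists F; split; [split | exact: (card_free_spanning m0 n0 freeF spanF) | exact: SF].
  exact: spanning_connected spanF.
by move/(circuit_dependent (R := K)); apply; apply/independent_free.
Qed.

Section PowerInequalities.
Variable R : realType.

Lemma expR_tangent_lt (y z : R) : y != z -> expR z * (1 + (y - z)) < expR y.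
Proof.
move=> yz; have -> : expR y = expR z * expR (y - z) by rewrite -expRD addrC subrK.
by rewrite ltr_pM2l ?expR_gt0 // expR_gt1Dx // subr_eq0.
Qed.

Lemma powR_lt_bernoulli (a b : R) : 0 < b < 1 -> 0 < a -> a != 1 ->
  a `^ b < 1 + b * (a - 1).
Proof.
move=> /andP[b0 b1] a0 a1; rewrite /powR gt_eqF //; set L := ln a.
have eL : expR L = a by rewrite lnK.
have L0 : L != 0 by apply: contra a1 => /eqP L0; rewrite -eL L0 expR0.
(* tangent lines of expR at b L, evaluated at L and 0, weighted by b and 1 - b *)
have h1 := expR_tangent_lt (y := L) (z := b * L).
have h2 := expR_tangent_lt (y := 0) (z := b * L).
have {h1}h1 : b * (expR (b * L) * (1 + (L - b * L))) < b * a.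
  rewrite ltr_pM2l // -eL; apply: h1.
  by rewrite -subr_eq0 -{1}[L]mul1r -mulrBl mulf_neq0 // subr_eq0 gt_eqF.
have {h2}h2 : (1 - b) * (expR (b * L) * (1 + (0 - b * L))) < (1 - b) * 1.
  rewrite ltr_pM2l ?subr_gt0 // -[X in _ < X]expR0; apply: h2.
  by rewrite eq_sym mulf_neq0 // gt_eqF.
have E : b * (expR (b * L) * (1 + (L - b * L))) + (1 - b) * (expR (b * L) * (1 + (0 - b * L)))
    = expR (b * L) by ring.
lra.
Qed.

Lemma powR_gt_bernoulli (a b : R) : 1 < b -> 0 < a -> a != 1 ->
  1 + b * (a - 1) < a `^ b.
Proof.
move=> b1 a0 a1; have b0 : 0 < b by apply: lt_trans b1.
have c0 : 0 < a `^ b by apply: powR_gt0.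
have ca : (a `^ b) `^ b^-1 = a by rewrite -powRrM mulfV ?gt_eqF // powRr1 // ltW.
have c1 : a `^ b != 1 by apply: contra a1 => /eqP c1; rewrite -ca c1 powR1.
have bV : 0 < b^-1 < 1 by rewrite invr_gt0 b0 invf_lt1.
have := powR_lt_bernoulli bV c0 c1; rewrite ca -(ltr_pM2l b0) mulrDr mulrA mulfV ?gt_eqF //.
lra.
Qed.

Lemma powR_bernoulli (a b : R) : 0 < b -> b != 1 -> 0 < a -> a != 1 ->
  (1 - b)^-1 * a `^ b < (1 - b)^-1 * (1 + b * (a - 1)).
Proof.
move=> b0 + a0 a1; rewrite neq_lt => /orP[lt_b1 | gt_b1].
  by rewrite ltr_pM2l ?invr_gt0 ?subr_gt0 // powR_lt_bernoulli ?b0.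
by rewrite ltr_nM2l ?invr_lt0 ?subr_lt0 // powR_gt_bernoulli.
Qed.

Lemma powR_midpoint (b x d : R) : 0 < b -> b != 1 -> 0 < x + d -> 0 < x - d -> d != 0 ->
  (1 - b)^-1 * ((x + d) `^ b + (x - d) `^ b) < (1 - b)^-1 * (2 * x `^ b).
Proof.
move=> b0 b1 xd1 xd2 d0; have x0 : 0 < x by lra.
have scaleE y : 0 < y -> y `^ b = x `^ b * (y / x) `^ b.
  move=> y0; rewrite -powRM ?(ltW x0) ?divr_ge0 ?ltW //.
  by rewrite mulrC divfK // gt_eqF.
have neq1 y : y != x -> y / x != 1.
  by apply: contra => /eqP yx; rewrite -[y](divfK (lt0r_neq0 x0)) yx mul1r.
have shift e : e != 0 -> x + e != x by apply: contra => /eqP xe; apply/eqP; lra.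
have B1 := powR_bernoulli b0 b1 (divr_gt0 xd1 x0) (neq1 _ (shift _ d0)).
have Nd0 : - d != 0 by rewrite oppr_eq0.
have B2 := powR_bernoulli b0 b1 (divr_gt0 xd2 x0) (neq1 _ (shift _ Nd0)).
rewrite (scaleE (x + d)) // (scaleE (x - d)) //.
have uu' : (x - d) / x - 1 = - ((x + d) / x - 1) by field; exact: lt0r_neq0.
rewrite uu' in B2; set c := (1 - b)^-1 in B1 B2 *; set X := x `^ b.
have -> : c * (X * ((x + d) / x) `^ b + X * ((x - d) / x) `^ b) =
    X * (c * ((x + d) / x) `^ b + c * ((x - d) / x) `^ b) by ring.
have -> : c * (2 * X) = X * (c * (1 + b * ((x + d) / x - 1)) + c * (1 + b * - ((x + d) / x - 1))).
  by ring.
by rewrite ltr_pM2l ?powR_gt0 // ltrD.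
Qed.

End PowerInequalities.

Lemma exists_pos_lower_bound (R : realDomainType) (T : finType) (A : {pred T}) (f : T -> R) :
  {in A, forall x, 0 < f x} -> exists2 e, 0 < e & {in A, forall x, e <= f x}.
Proof.
move=> f_gt0; have [x0 x0A | A0] := pickP [pred x in A]; last first.
  by exists 1 => // x xA; have := A0 x; rewrite /= xA.
have [y yA ymin] := arg_minP f x0A.
by exists (f y); [exact: f_gt0 | exact: ymin].
Qed.

Section Transport.
Variables (R : realType) (m n : nat) (p : 'I_m -> R) (q : 'I_n -> R).
Local Notation transport := (transport p q).
Local Notation support := (@support R m n).

Lemma in_support (P : 'M[R]_(m, n)) i j : ((i, j) \in support P) = (P i j != 0).
Proof. by rewrite inE. Qed.

Lemma transport_perturb P D t : transport P -> balanced D ->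
  (forall i j, 0 <= P i j + t * D i j) -> transport (P + t *: D).
Proof.
case=> _ rowP colP [rowD colD] PD0; split=> [i j | i | j]; first by rewrite !mxE.
  by under eq_bigr do rewrite !mxE; rewrite big_split /= -mulr_sumr rowD mulr0 addr0.
by under eq_bigr do rewrite !mxE; rewrite big_split /= -mulr_sumr colD mulr0 addr0.
Qed.

Lemma small_perturbation P D : transport P -> balanced D -> supported_on (support P) D ->
  exists2 e, 0 < e & forall t, `|t| <= e ->
    transport (P + t *: D) /\ support (P + t *: D) = support P.
Proof.
move=> tP balD suppD; have [P0 _ _] := tP.
have D0 i j : P i j = 0 -> D i j = 0 by move=> Pij; apply: suppD; rewrite in_support Pij eqxx.
pose f (x : 'I_m * 'I_n) := P x.1 x.2 / (1 + `|D x.1 x.2|).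
have [|e e0 eP] := @exists_pos_lower_bound _ _ (support P) f.
  by move=> [i j]; rewrite in_support => Pij; rewrite divr_gt0 ?ltr_pwDl // lt0r Pij P0.
exists e => // t te.
have pos i j : P i j != 0 -> 0 < P i j + t * D i j.
  move=> Pij; have D1 : 0 < 1 + `|D i j| by have := normr_ge0 (D i j); lra.
  have := eP (i, j); rewrite in_support Pij /f /= => /(_ isT).
  rewrite ler_pdivlMr // mulrDr mulr1 => eD.
  have : `|t * D i j| <= e * `|D i j| by rewrite normrM ler_wpM2r.
  move=> /lerNnormlW; lra.
split.
  apply: transport_perturb => // i j; have [Pij | /pos/ltW //] := eqVneq (P i j) 0.
  by rewrite Pij D0 // mulr0 addr0.
apply/setP => -[i j]; rewrite !in_support !mxE; have [Pij | /pos/gt_eqF -> //] := eqVneq (P i j) 0.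
by rewrite Pij D0 // mulr0 addr0 eqxx.
Qed.

Lemma tree_extreme P : tree_transport p q P -> extreme p q P.
Proof.
case=> tP [T [[_ noT] _ PT]]; split=> // A B t tA tB /andP[t0 t1] PE.
have [[A0 rowA colA] [B0 rowB colB]] := (tA, tB).
suff : A - B = 0 by move/eqP; rewrite subr_eq0 => /eqP.
apply: (acyclic_independent noT) => [i j ijT | ].
  have /eqP : P i j == 0 by apply: contraR ijT; rewrite -in_support; apply: (fintype.subsetP PT).
  rewrite PE !mxE => PAB; have := A0 i j; have := B0 i j => B0' A0'.
  have [Aij Bij] : A i j = 0 /\ B i j = 0 by split; nra.
  by rewrite Aij Bij subrr.
split=> [i | j]; under eq_bigr do rewrite !mxE.
  by rewrite sumrB rowA rowB subrr.
by rewrite sumrB colA colB subrr.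
Qed.

Lemma extreme_independent_support P : extreme p q P -> independent R (support P).
Proof.
case=> tP extP D suppD balD.
have [e e0 small] := small_perturbation tP balD suppD.
have e_le : `|e| <= e by rewrite (ger0_norm (ltW e0)).
have [tA _] := small e e_le.
have eN_le : `|- e| <= e by rewrite normrN.
have [tB _] := small (- e) eN_le.
have : P + e *: D = P + (- e) *: D.
  apply: (extP _ _ 2^-1) => //; first by rewrite invr_gt0 invf_lt1 ?ltr0n ?ltr1n.
  by apply/matrixP => i j; rewrite !mxE; field.
move/matrixP => AB; apply/matrixP => i j; have := AB i j; rewrite !mxE => h.
have /eqP : e * D i j = 0 by lra.
by rewrite mulf_eq0 gt_eqF //= => /eqP.
Qed.

Lemma balanced_neg_entry (D : 'M[R]_(m, n)) : balanced D -> D != 0 ->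
  exists x : 'I_m * 'I_n, D x.1 x.2 < 0.
Proof.
move=> [rowD _] /matrix0Pn[i [j /eqP Dij]].
have [j' Dij' | D_ge0] := pickP (fun j' => D i j' < 0); first by exists (i, j').
exfalso; apply: Dij; apply: (psumr_eq0P _ (rowD i)) => // j' _.
by rewrite leNgt D_ge0.
Qed.

Lemma transport_smaller_support (P D : 'M[R]_(m, n)) : transport P -> balanced D ->
  supported_on (support P) D -> D != 0 ->
  exists Q, transport Q /\ support Q \proper support P.
Proof.
move=> tP balD suppD D0; have [P0 _ _] := tP.
have DP i j : P i j = 0 -> D i j = 0 by move=> Pij; apply: suppD; rewrite in_support Pij eqxx.
have [x Dx] := balanced_neg_entry balD D0.
(* move along D until the first entry of P vanishes *)
pose f (y : 'I_m * 'I_n) := P y.1 y.2 / - D y.1 y.2.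
have [z Dz zmin] := @arg_minP _ _ _ x (fun y => D y.1 y.2 < 0) f Dx.
have t0 : 0 <= f z by rewrite divr_ge0 // oppr_ge0 ltW.
exists (P + f z *: D); split.
  apply: transport_perturb => // i j; have [Dij | Dij] := ltP (D i j) 0.
    have := zmin (i, j) Dij; rewrite /f /= ler_pdivlMr ?oppr_gt0 // mulrN; lra.
  by apply: addr_ge0; [exact: P0 | exact: mulr_ge0].
apply/properP; split.
  apply/fintype.subsetP => -[i j]; rewrite !in_support !mxE; apply: contraNneq => Pij.
  by rewrite Pij DP // mulr0 addr0.
case: z Dz {zmin t0} => i j /= Dij; exists (i, j); rewrite !in_support.
  by apply: contraTneq Dij => /DP ->; rewrite ltxx.
by rewrite !mxE /f /= invrN mulrN mulNr divfK ?subrr ?eqxx ?lt_eqF.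
Qed.

Lemma independent_support_tree P : (0 < m)%N -> (0 < n)%N -> transport P ->
  independent R (support P) -> tree_transport p q P.
Proof.
move=> m0 n0 tP /(independent_extends_to_tree m0 n0) [T [treeT cardT sT]].
by split=> //; exists T.
Qed.

End Transport.

Lemma ltr_sum_strict (V : numDomainType) (I : finType) (A : {pred I}) (F G : I -> V) x :
  x \in A -> {in A, forall y, F y <= G y} -> F x < G x ->
  \sum_(y in A) F y < \sum_(y in A) G y.
Proof.
move=> xA FG Fx; rewrite (bigD1 x) //= [X in _ < X](bigD1 x) //= ltr_leD //.
by apply: ler_sum => y /andP[yA _]; apply: FG.
Qed.

Section Entropy.
Variables (R : realType) (m n : nat) (p : 'I_m -> R) (q : 'I_n -> R).
Hypothesis p_sum1 : \sum_i p i = 1.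
Local Notation transport := (transport p q).
Local Notation support := (@support R m n).
Local Notation power_sum := (@power_sum R m n).
Local Notation entropy := (@entropy R m n).

Lemma power_sumE alpha P : power_sum alpha P = \sum_(x in support P) P x.1 x.2 `^ alpha.
Proof. by rewrite /power_sum pair_big_dep /=; apply: eq_bigl => -[i j]; rewrite in_support. Qed.

Lemma power_sum0 P : power_sum 0 P = #|support P|%:R.
Proof. by rewrite power_sumE (eq_bigr (fun=> 1)) => [|x _]; rewrite ?sumr_const ?powRr0. Qed.

Lemma transport_support_sum P : transport P -> \sum_(x in support P) P x.1 x.2 = 1.
Proof.
case=> _ rowP _; rewrite big_mkcond sum_pairE -p_sum1; apply: eq_bigr => i _.
rewrite -rowP; apply: eq_bigr => j _; rewrite in_support.
by case: eqP.
Qed.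

Lemma transport_entry_le1 P x : transport P -> x \in support P -> P x.1 x.2 <= 1.
Proof.
move=> tP xP; have [P0 _ _] := tP; rewrite -(transport_support_sum tP) (bigD1 x) //=.
by rewrite lerDl sumr_ge0 // => y _; apply: P0.
Qed.

Lemma power_sum_gt0 alpha P : transport P -> 0 < power_sum alpha P.
Proof.
move=> tP; have [P0 _ _] := tP; rewrite power_sumE.
have [S0 | [x xP]] := set_0Vmem (support P).
  by move: (transport_support_sum tP); rewrite S0 big_set0 => /eqP; rewrite eq_sym oner_eq0.
rewrite [ltLHS](_ : 0 = \sum_(y in support P) 0); last by rewrite big1.
apply: (ltr_sum_strict xP) => [y _|].
  exact: powR_ge0.
by rewrite powR_gt0 // lt0r -in_support -surjective_pairing xP P0.
Qed.

Lemma entropy_ge0 k alpha P : alpha != 1 -> transport P -> 0 <= entropy k alpha P.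
Proof.
move=> alpha1 tP; have [P0 _ _] := tP.
have Pin x : x \in support P -> 0 < P x.1 x.2 <= 1.
  move=> xP; rewrite transport_entry_le1 // andbT.
  by case: x xP => i j; rewrite in_support lt0r => ->; rewrite P0.
have S1 := transport_support_sum tP.
move: alpha1; rewrite neq_lt => /orP[lt1 | gt1].
  have ge1 : 1 <= power_sum alpha P.
    by rewrite power_sumE -S1; apply: ler_sum => x /Pin/ger1_powR; apply; apply: ltW.
  have c0 : 0 <= (1 - alpha)^-1 by rewrite invr_ge0 subr_ge0 ltW.
  by case: k => /=; rewrite mulr_ge0 ?ln_ge0 ?subr_ge0.
have le1 : power_sum alpha P <= 1.
  by rewrite power_sumE -S1; apply: ler_sum => x /Pin/ge1r_powR; apply; apply: ltW.
have c0 : (1 - alpha)^-1 <= 0 by rewrite invr_le0 subr_le0 ltW.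
by case: k => /=; rewrite mulr_le0 ?ln_le0 ?subr_le0 ?power_sum_gt0.
Qed.

Lemma entropy_lt k alpha P Q : 0 < power_sum alpha P -> 0 < power_sum alpha Q ->
  (1 - alpha)^-1 * power_sum alpha P < (1 - alpha)^-1 * power_sum alpha Q ->
  entropy k alpha P < entropy k alpha Q.
Proof.
rewrite /entropy; set c := (1 - alpha)^-1 => P0 Q0.
have [c0 | c0 | ->] := ltgtP c 0; last by rewrite !mul0r ltxx.
  by rewrite ltr_nM2l // => PQ; case: k => /=; rewrite ltr_nM2l ?ltr_ln ?posrE ?ltrD2r.
by rewrite ltr_pM2l // => PQ; case: k => /=; rewrite ltr_pM2l ?ltr_ln ?posrE ?ltrD2r.
Qed.

Lemma power_sum_midpoint alpha P D e : 0 < alpha -> alpha != 1 -> D != 0 ->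
  supported_on (support P) D -> 0 < e ->
  (forall t, `|t| <= e -> transport (P + t *: D) /\ support (P + t *: D) = support P) ->
  (1 - alpha)^-1 * (power_sum alpha (P + e *: D) + power_sum alpha (P + (- e) *: D))
    < (1 - alpha)^-1 * (2 * power_sum alpha P).
Proof.
move=> alpha0 alpha1 /matrix0Pn[i [j Dij]] suppD e0 small.
have e_le : `|e| <= e by rewrite (ger0_norm (ltW e0)).
have eN_le : `|- e| <= e by rewrite normrN.
have pos t x : `|t| <= e -> x \in support P -> 0 < P x.1 x.2 + t * D x.1 x.2.
  move=> te; have [[Q0 _ _] <-] := small t te; case: x => a b.
  by rewrite in_support !mxE lt0r => ->; have := Q0 a b; rewrite !mxE.
have mid x : x \in support P -> D x.1 x.2 != 0 ->
    (1 - alpha)^-1 * ((P x.1 x.2 + e * D x.1 x.2) `^ alpha + (P x.1 x.2 - e * D x.1 x.2) `^ alpha)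
      < (1 - alpha)^-1 * (2 * P x.1 x.2 `^ alpha).
  move=> xP Dx; apply: powR_midpoint; rewrite ?pos -?mulNr ?pos //.
  exact: mulf_neq0 (lt0r_neq0 e0) Dx.
have ijP : (i, j) \in support P by apply: contraT => /suppD /eqP; rewrite (negPf Dij).
rewrite !power_sumE (small e e_le).2 (small (- e) eN_le).2 -big_split /= !mulr_sumr.
apply: (ltr_sum_strict ijP) => [x xP|]; rewrite !mxE !mulNr; last exact: mid.
have [Dx | Dx] := eqVneq (D x.1 x.2) 0; last exact/ltW/mid.
by rewrite Dx mulr0 addr0 subr0 mulr_natl mulr2n.
Qed.

Lemma minimizer_independent_support k alpha P : 0 <= alpha -> alpha != 1 -> transport P ->
  (forall Q, transport Q -> entropy k alpha P <= entropy k alpha Q) -> independent R (support P).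
Proof.
move=> alpha0 alpha1 tP minP D suppD balD; apply/eqP; apply: contraT => D0.
suff [Q tQ QP] : exists2 Q, transport Q & entropy k alpha Q < entropy k alpha P.
  by move: (minP Q tQ); rewrite leNgt QP.
have [-> | alpha_neq0] := eqVneq alpha 0.
  have [Q [tQ QP]] := transport_smaller_support tP balD suppD D0.
  exists Q => //; apply: entropy_lt; rewrite ?power_sum_gt0 // !power_sum0 subr0 invr1 !mul1r.
  by rewrite ltr_nat proper_card.
have alpha_gt0 : 0 < alpha by rewrite lt0r alpha_neq0.
have [e e0 small] := small_perturbation tP balD suppD.
have e_le : `|e| <= e by rewrite (ger0_norm (ltW e0)).
have eN_le : `|- e| <= e by rewrite normrN.
have [[tA _] [tB _]] := (small e e_le, small (- e) eN_le).
have := power_sum_midpoint alpha_gt0 alpha1 D0 suppD e0 small; rewrite mulrDr => mid.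
have [lt | ge] := ltP ((1 - alpha)^-1 * power_sum alpha (P + e *: D))
                      ((1 - alpha)^-1 * power_sum alpha P).
  by exists (P + e *: D); rewrite // entropy_lt ?power_sum_gt0.
by exists (P + (- e) *: D); rewrite // entropy_lt ?power_sum_gt0 //; lra.
Qed.

End Entropy.

Local Open Scope classical_set_scope.

Theorem corollary1p1 (R : realType) (m n : nat) (p : 'I_m -> R) (q : 'I_n -> R)
    (alpha : R) (k : entropy_kind) (Pt : 'M[R]_(m, n)) :
  (2 <= m)%N -> (2 <= n)%N ->
  (forall i, 0 < p i) -> \sum_(i < m) p i = 1 ->
  (forall j, 0 < q j) -> \sum_(j < n) q j = 1 ->
  0 <= alpha -> alpha != 1 ->
  transport p q Pt ->
  entropy k alpha Pt = inf [set entropy k alpha P | P in transport p q] ->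
  [/\ tree_transport p q Pt,
      (forall P, tree_transport p q P <-> extreme p q P) &
      (forall P, tree_transport p q P -> entropy k alpha Pt <= entropy k alpha P)].
Proof.
move=> m2 n2 _ p_sum1 _ _ alpha0 alpha1 tPt Pt_inf.
have [m0 n0] : (0 < m)%N /\ (0 < n)%N by split; apply: ltnW.
have minPt P : transport p q P -> entropy k alpha Pt <= entropy k alpha P.
  move=> tP; rewrite Pt_inf; apply: ge_inf; last by exists P.
  by exists 0 => _ [Q tQ <-]; exact: (entropy_ge0 p_sum1 k alpha1 tQ).
split=> [|P|P [tP _]]; last exact: minPt.
  apply: (independent_support_tree m0 n0 tPt).
  exact: (minimizer_independent_support p_sum1 alpha0 alpha1 tPt minPt).
split=> [|extP]; first exact: tree_extreme.
exact: independent_support_tree m0 n0 extP.1 (extreme_independent_support extP).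
Qed.
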